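(* Let $I$ be a finite set of positive integers and $m=\max(I\cup\{0\})$. Then $(-1)^m d(I;-1)\ge 0$. Equivalently, if $d(I;n)=\sum_{k=0}^m(-1)^{m-k}c_k(I)\binom{n+1}{k}$ is the expansion of the descent polynomial in the basis $\{\binom{n+1}{k}\}_{k\ge 0}$, then $c_0(I)\ge 0$.
   Context: For $n>m$, $d(I;n)$ is the number of permutations $\pi\in\mathfrak S_n$ with $\{i\mid\pi_i>\pi_{i+1}\}=I$; it is a polynomial in $n$ of degree $m$, extended to all complex arguments, and $d(I;-1)$ is its value at $-1$ (note $d(I;-1)=(-1)^m c_0(I)$). *)

From HB Require Import structures.
From mathcomp Require Import all_boot all_order all_algebra all_fingroup.
Set Implicit Arguments. Unset Strict Implicit. Unset Printing Implicit Defensive.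
Import Order.TTheory GRing.Theory Num.Theory.

(* one-line notation pi = pi_1 ... pi_n of s : 'S_n (values 0..n-1) *)
Definition perm_word (n : nat) (s : 'S_n) : seq nat := [seq val (s i) | i <- enum 'I_n].

(* i (1-indexed, 1 <= i < n) is a descent: pi_i > pi_{i+1} *)
Definition is_descent (n : nat) (s : 'S_n) (i : nat) : bool :=
  nth 0 (perm_word s) i.-1 > nth 0 (perm_word s) i.

Definition descent_set (n : nat) (s : 'S_n) : seq nat :=
  [seq i <- iota 1 n.-1 | is_descent s i].

Definition same_set (A B : seq nat) : bool :=
  all (fun x => x \in B) A && all (fun x => x \in A) B.

Definition dcount (I : seq nat) (n : nat) : nat :=
  #|[pred s : 'S_n | same_set (descent_set s) I]|.

Definition maxI (I : seq nat) : nat := \max_(i <- I) i.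

From HB Require Import structures.
From mathcomp Require Import all_boot all_order all_algebra all_fingroup.
From mathcomp Require Import zify ring lra.
Import Order.TTheory GRing.Theory Num.Theory.
Set Implicit Arguments. Unset Strict Implicit. Unset Printing Implicit Defensive.

(* Let m = max I > 0, J = I \ {m} and m' = max J.  A permutation of [n] is a unique shuffle of
   a permutation of [m] placed on an m-subset and a permutation of [n - m] placed on the rest, so
   d(J;n) + d(I;n) = C(n,m) d(J;m) for n >= m.  Hence p_I = d(J;m) C(x,m) - p_J and, writing
   c_I = (-1)^m p_I(-1), we get c_I = d(J;m) - (-1)^(m-m') c_J.  By induction c_J >= 0, which
   settles the case m - m' odd.  If m - m' is even then m >= m' + 2, and the induction is
   strengthened by c_I <= d(I;n) for n >= m + 2: indeed c_I <= d(J;m) + c_J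
   <= d(J;m) + d(J;m+1) <= d(I;m+2), the last step by an explicit injection, and d(I;n) is
   nondecreasing in n. *)

Lemma size_perm_word n (s : 'S_n) : size (perm_word s) = n.
Proof. by rewrite /perm_word size_map size_enum_ord. Qed.

Lemma nth_perm_word n (s : 'S_n) i (lt_in : i < n) :
  nth 0 (perm_word s) i = s (Ordinal lt_in).
Proof.
rewrite /perm_word (nth_map (Ordinal lt_in)) ?size_enum_ord //=.
by congr (val (s _)); apply: val_inj; rewrite /= nth_enum_ord.
Qed.

Lemma mem_perm_word n (s : 'S_n) x : (x \in perm_word s) = (x < n).
Proof.
apply/mapP/idP => [[i _ ->] | lt_xn]; first exact: ltn_ord.
by exists ((s^-1)%g (Ordinal lt_xn)); rewrite ?mem_enum //= permKV.
Qed.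

Lemma perm_word_uniq n (s : 'S_n) : uniq (perm_word s).
Proof. by rewrite map_inj_uniq ?enum_uniq // => i j /val_inj/perm_inj. Qed.

Lemma perm_word_iota n (s : 'S_n) : perm_eq (perm_word s) (iota 0 n).
Proof.
apply: uniq_perm; rewrite ?perm_word_uniq ?iota_uniq // => x.
by rewrite mem_perm_word mem_iota.
Qed.

Lemma perm_word_inj n : injective (@perm_word n).
Proof.
move=> s t eq_st; apply/permP => i; apply: val_inj.
have := congr1 (nth 0 ^~ i) eq_st.
by rewrite !(nth_perm_word _ (ltn_ord i)) (_ : Ordinal _ = i) //; apply: val_inj.
Qed.

Lemma perm_word1 n : perm_word (1%g : 'S_n) = iota 0 n.
Proof.
apply: (@eq_from_nth _ 0); rewrite size_perm_word ?size_iota // => i lt_in.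
by rewrite (nth_perm_word _ lt_in) perm1 nth_iota.
Qed.

(* The identity is a junk value, used when [w] is not a word of ['S_n]. *)
Definition perm_of_word n (w : seq nat) : 'S_n :=
  insubd (1%g : 'S_n) [ffun i : 'I_n => insubd i (nth 0 w i) : 'I_n].

Lemma perm_of_wordK n w : perm_eq w (iota 0 n) -> perm_word (perm_of_word n w) = w.
Proof.
move=> w_perm.
have size_w : size w = n by rewrite (perm_size w_perm) size_iota.
have w_uniq : uniq w by rewrite (perm_uniq w_perm) iota_uniq.
have w_lt k : k < n -> nth 0 w k < n.
  move=> lt_kn; have : nth 0 w k \in w by rewrite mem_nth ?size_w.
  by rewrite (perm_mem w_perm) mem_iota.
have valE (i : 'I_n) : val (insubd i (nth 0 w i) : 'I_n) = nth 0 w i.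
  by rewrite val_insubd w_lt.
have f_inj : injectiveb [ffun i : 'I_n => insubd i (nth 0 w i) : 'I_n].
  apply/injectiveP => i j; rewrite !ffunE => /(congr1 val).
  by rewrite !valE => /eqP; rewrite nth_uniq ?size_w // => /eqP/val_inj.
apply: (@eq_from_nth _ 0); rewrite size_perm_word ?size_w // => i lt_in.
by rewrite (nth_perm_word _ lt_in) /perm_of_word -pvalE val_insubd f_inj ffunE valE.
Qed.

Lemma card_perm_words_ge n (Q : pred (seq nat)) (W : seq (seq nat)) :
  uniq W -> {in W, forall w, perm_eq w (iota 0 n) && Q w} ->
  size W <= #|[pred s : 'S_n | Q (perm_word s)]|.
Proof.
move=> W_uniq W_ok.
have wK : {in W, forall w, perm_word (perm_of_word n w) = w}.
  by move=> w /W_ok/andP[w_perm _]; apply: perm_of_wordK.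
have map_uniq : uniq (map (@perm_of_word n) W).
  by rewrite map_inj_in_uniq // => v w Wv Ww e; rewrite -(wK v) // -(wK w) // e.
rewrite -(size_map (@perm_of_word n)) -(card_uniqP map_uniq).
apply/subset_leq_card/subsetP => _ /mapP[w Ww ->].
by rewrite inE /= wK //; case/andP: (W_ok w Ww).
Qed.

Definition descents (w : seq nat) : seq nat :=
  [seq i <- iota 1 (size w).-1 | nth 0 w i.-1 > nth 0 w i].

Definition descent (w : seq nat) (i : nat) : bool :=
  (0 < i < size w) && (nth 0 w i.-1 > nth 0 w i).

Definition has_descents (J w : seq nat) : bool := same_set (descents w) J.

Lemma mem_descents w i : (i \in descents w) = descent w i.
Proof.
rewrite mem_filter mem_iota /descent andbC; congr (_ && _).
by case: (size w) => [|k] /=; [case: i | rewrite add1n ltnS].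
Qed.

Lemma has_descentsP J w : reflect (forall i, (i \in J) = descent w i) (has_descents J w).
Proof.
apply: (iffP andP) => [[/allP J_sub /allP sub_J] i | J_eq].
  apply/idP/idP => [/sub_J | ?]; first by rewrite -mem_descents.
  by apply: J_sub; rewrite mem_descents.
by split; apply/allP => i; rewrite J_eq mem_descents.
Qed.

Lemma dcountE J n : dcount J n = #|[pred s : 'S_n | has_descents J (perm_word s)]|.
Proof. by apply: eq_card => s; rewrite !inE /= /has_descents /descents size_perm_word. Qed.

Lemma dcount_eq_mem J J' n : J =i J' -> dcount J n = dcount J' n.
Proof.
move=> eq_J; rewrite !dcountE; apply: eq_card => s; rewrite !inE /=.
by apply/has_descentsP/has_descentsP => desE i; rewrite -desE eq_J.
Qed.

Lemma descent_map f w : {in w &, {mono f : x y / x < y}} -> descent (map f w) =1 descent w.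
Proof.
move=> f_mono i; rewrite /descent size_map.
case: (boolP (0 < i < size w)) => //= /andP[i_gt0 lt_iw].
have lt_i1w : i.-1 < size w := leq_ltn_trans (leq_pred i) lt_iw.
by rewrite !(nth_map 0) ?f_mono ?mem_nth.
Qed.

Lemma has_descents_map J f w :
  {in w &, {mono f : x y / x < y}} -> has_descents J (map f w) = has_descents J w.
Proof.
by move=> f_mono; apply/has_descentsP/has_descentsP => desE i; rewrite desE descent_map.
Qed.

Lemma descent_cat u v i :
  descent (u ++ v) i =
  if i < size u then descent u i
  else if i == size u then [&& 0 < i, 0 < size v & nth 0 v 0 < nth 0 u i.-1]
  else descent v (i - size u).
Proof.
rewrite /descent size_cat !nth_cat.
case: (ltnP i (size u)) => [lt_iu | le_ui].
  by rewrite (_ : i.-1 < size u); [congr (_ && _) | ]; lia.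
case: eqP => [-> | ne_iu]; last first.
  rewrite (_ : i.-1 < size u = false); last by lia.
  by rewrite (_ : i.-1 - size u = (i - size u).-1); [congr (_ && _) | ]; lia.
rewrite subnn; case: (posnP (size u)) => [-> // | u_gt0].
rewrite (_ : (size u).-1 < size u); last by lia.
case: (posnP (size v)) => [-> | v_gt0]; first by rewrite addn0 ltnn.
by rewrite -{1}(addn0 (size u)) ltn_add2l v_gt0.
Qed.

Lemma has_descents_take_drop J (b : bool) m w : m <= size w -> all (fun j => 0 < j < m) J ->
  has_descents (nseq b m ++ J) w =
  [&& has_descents J (take m w), has_descents [::] (drop m w) & descent w m == b].
Proof.
move=> le_mw /allP J_lt.
have size_u : size (take m w) = m by rewrite size_takel.
have notin_J i : m <= i -> (i \in J) = false by move=> le_mi; apply/negP => /J_lt; lia.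
have descentE i : descent w i = descent (take m w ++ drop m w) i by rewrite cat_take_drop.
apply/has_descentsP/and3P => [desE | [/has_descentsP uE /has_descentsP vE /eqP bE] i].
- split.
  + apply/has_descentsP => i; have := desE i.
    rewrite mem_cat mem_nseq descentE descent_cat size_u.
    case: (ltnP i m) => [lt_im | le_mi]; first by rewrite (_ : (i == m) = false) ?andbF //; lia.
    by rewrite notin_J // /descent size_u (leq_gtF le_mi) andbF.
  + apply/has_descentsP => i; rewrite in_nil; case: (posnP i) => [-> // | i_gt0].
    have := desE (i + m); rewrite mem_cat mem_nseq notin_J ?leq_addl //.
    rewrite descentE descent_cat size_u (leq_gtF (leq_addl i m)) addnK.
    by rewrite (_ : (i + m == m) = false) ?andbF //; lia.
  + by rewrite -desE mem_cat mem_nseq eqxx lt0b andbT notin_J ?orbF.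
- rewrite mem_cat mem_nseq; case: (eqVneq i m) => [-> | ne_im].
    by rewrite lt0b andbT notin_J // orbF bE.
  rewrite andbF /= descentE descent_cat size_u (negPf ne_im).
  case: (ltnP i m) => [lt_im | le_mi]; first exact: uE.
  by rewrite notin_J // -vE in_nil.
Qed.

Lemma has_descents_cat_pair J w x y :
  0 < size w -> all (fun j => j < size w) J -> x < nth 0 w (size w).-1 -> x < y ->
  has_descents J w -> has_descents (size w :: J) (w ++ [:: x; y]).
Proof.
move=> w_gt0 /allP J_lt lt_x_last lt_xy /has_descentsP wE; apply/has_descentsP => i.
rewrite inE descent_cat; case: ltnP => [lt_iw | le_wi].
  by rewrite (_ : (i == size w) = false) ?wE //; lia.
have notin_J : (i \in J) = false by apply/negP => /J_lt; lia.
case: eqVneq => [-> | ne_iw] /=; first by rewrite w_gt0.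
rewrite notin_J /descent /=.
have [-> | ge2] : i - size w = 1 \/ 1 < i - size w by lia.
  by rewrite /= ltnNge (ltnW lt_xy).
by rewrite (leq_gtF ge2) andbF.
Qed.

Lemma dcount_nil n : dcount [::] n = 1.
Proof.
rewrite dcountE; apply: (@eq_card1 _ (1%g : 'S_n)) => s; rewrite !inE.
apply/idP/eqP => [/has_descentsP desE | ->]; last first.
  apply/has_descentsP => i; rewrite in_nil perm_word1 /descent size_iota.
  by case: (boolP (0 < i < n)) => //= lt_in; rewrite !nth_iota; lia.
apply: perm_word_inj; rewrite perm_word1.
apply: (sorted_eq leq_trans anti_leq); rewrite ?iota_sorted ?perm_word_iota //.
apply/(sortedP 0) => i lt_i1n.
by have := desE i.+1; rewrite in_nil /descent lt_i1n /= => /esym/negbT; rewrite -leqNgt.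
Qed.

(* Appending the largest value [n] creates no descent. *)
Lemma dcount_leS J n : dcount J n <= dcount J n.+1.
Proof.
rewrite !dcountE cardE -(size_map (fun s : 'S_n => rcons (perm_word s) n)).
apply: card_perm_words_ge.
  by rewrite map_inj_uniq ?enum_uniq // => s t /rcons_inj[/perm_word_inj].
move=> w /mapP[s]; rewrite mem_enum => /has_descentsP desE ->.
apply/andP; split.
  by rewrite -cats1 -addn1 iotaD perm_cat2r perm_word_iota.
apply/has_descentsP => i; rewrite -cats1 desE descent_cat size_perm_word.
case: ltnP => // le_ni; rewrite /descent size_perm_word (leq_gtF le_ni) andbF.
case: eqP => [eq_in | _]; last by rewrite /descent /=; lia.
case: (posnP i) => [-> // | i_gt0] /=.
suff : nth 0 (perm_word s) i.-1 < n by lia.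
by rewrite -(mem_perm_word s) mem_nth // size_perm_word; lia.
Qed.

Lemma dcount_le J : {homo dcount J : m n / m <= n}.
Proof.
exact: (homo_leq leqnn leq_trans (dcount_leS J)).
Qed.

Lemma perm_word_take_nth m (t : 'S_m.+1) :
  perm_word t = take m (perm_word t) ++ [:: nth 0 (perm_word t) m].
Proof.
rewrite -{1}(cat_take_drop m (perm_word t)); congr (_ ++ _).
by rewrite (drop_nth 0) ?size_perm_word // drop_oversize ?size_perm_word.
Qed.

Definition append_min2 (w : seq nat) : seq nat := map (addn 2) w ++ [:: 0; 1].

Definition insert_min (m : nat) (w : seq nat) : seq nat :=
  map (addn 1) (take m w) ++ [:: 0; (nth 0 w m).+1].

Lemma nth_cat_pair (w : seq nat) x y k : size w = k -> nth 0 (w ++ [:: x; y]) k.+1 = y.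
Proof. by move=> <-; rewrite nth_cat ltnNge leqnSn subSnn. Qed.

Lemma perm_eq_append_min2 m (s : 'S_m) : perm_eq (append_min2 (perm_word s)) (iota 0 m.+2).
Proof.
rewrite /append_min2 perm_catC (_ : iota 0 m.+2 = [:: 0; 1] ++ iota 2 m) ?perm_cat2l; last first.
  by rewrite -[m.+2]/(2 + m) iotaD.
by rewrite -[2]addn0 iotaDl perm_map ?perm_word_iota.
Qed.

Lemma perm_eq_insert_min m (t : 'S_m.+1) : perm_eq (insert_min m (perm_word t)) (iota 0 m.+2).
Proof.
rewrite /insert_min (_ : iota 0 m.+2 = [:: 0] ++ map (addn 1) (iota 0 m.+1)); last by rewrite /= -iotaDl.
rewrite -[[:: 0; _]]/([:: 0] ++ [:: (nth 0 (perm_word t) m).+1]) perm_catCA perm_cat2l.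
by rewrite -[[:: _.+1]]/(map (addn 1) [:: _]) -map_cat -perm_word_take_nth perm_map ?perm_word_iota.
Qed.

Lemma has_descents_append_min2 J m (s : 'S_m) : 0 < m -> all (fun j => j < m) J ->
  has_descents J (perm_word s) -> has_descents (m :: J) (append_min2 (perm_word s)).
Proof.
move=> m_gt0 J_lt s_des.
have := @has_descents_cat_pair J (map (addn 2) (perm_word s)) 0 1.
rewrite (size_map (addn 2)) size_perm_word; apply=> //.
  by rewrite (nth_map 0) ?size_perm_word //; lia.
by rewrite has_descents_map // => x y _ _; rewrite ltn_add2l.
Qed.

Lemma has_descents_insert_min J m (t : 'S_m.+1) : 0 < m -> all (fun j => 0 < j < m) J ->
  has_descents J (perm_word t) -> has_descents (m :: J) (insert_min m (perm_word t)).
Proof.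
move=> m_gt0 J_lt t_des.
have J_ltm : all (fun j => j < m) J by apply: sub_all J_lt => j /andP[].
have size_take : size (take m (perm_word t)) = m by rewrite size_takel ?size_perm_word.
have := @has_descents_take_drop J false m (perm_word t).
rewrite size_perm_word /= t_des => /(_ (leqnSn m) J_lt) /esym/and3P[take_des _ _].
have := @has_descents_cat_pair J (map (addn 1) (take m (perm_word t))) 0.
rewrite (size_map (addn 1)) size_take; apply=> //.
  by rewrite (nth_map 0) ?size_take //; lia.
by rewrite has_descents_map // => x y _ _; rewrite ltn_add2l.
Qed.

Lemma append_min2_inj m : injective (fun s : 'S_m => append_min2 (perm_word s)).
Proof.
move=> s1 s2 /(congr1 (take m)).
rewrite !take_size_cat ?(size_map (addn 2)) ?size_perm_word //.
by move/(inj_map (@addnI 2))/perm_word_inj.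
Qed.

Lemma insert_min_inj m : injective (fun t : 'S_m.+1 => insert_min m (perm_word t)).
Proof.
move=> t1 t2 eq_t; apply: perm_word_inj.
have size_take (t : 'S_m.+1) : size (map (addn 1) (take m (perm_word t))) = m.
  by rewrite (size_map (addn 1)) size_takel ?size_perm_word.
have := congr1 (take m) eq_t; rewrite !take_size_cat ?size_take //.
move/(inj_map (@addnI 1)) => eq_take.
have := congr1 (nth 0 ^~ m.+1) eq_t; rewrite !nth_cat_pair ?size_take // => -[eq_last].
by rewrite (perm_word_take_nth t1) (perm_word_take_nth t2) eq_take eq_last.
Qed.

(* The last letter of [append_min2] is [1], so [t] would end with [0] and have a descent at [m]. *)
Lemma insert_min_neq_append_min2 J m (s : 'S_m) (t : 'S_m.+1) :
  0 < m -> m \notin J -> has_descents J (perm_word t) ->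
  insert_min m (perm_word t) != append_min2 (perm_word s).
Proof.
move=> m_gt0 m_notin /has_descentsP t_des; apply/eqP => /(congr1 (nth 0 ^~ m.+1)).
rewrite !nth_cat_pair ?(size_map (addn 1)) ?(size_map (addn 2)) ?size_takel ?size_perm_word //.
move=> [last0]; have := t_des m.
rewrite (negPf m_notin) /descent size_perm_word m_gt0 ltnSn last0 /=.
have : nth 0 (perm_word t) m.-1 != nth 0 (perm_word t) m.
  by rewrite nth_uniq ?perm_word_uniq ?size_perm_word //; lia.
by rewrite last0 lt0n => ->.
Qed.

Lemma dcount_add_le_cons J m : 0 < m -> all (fun j => 0 < j < m) J ->
  dcount J m + dcount J m.+1 <= dcount (m :: J) m.+2.
Proof.
move=> m_gt0 J_lt.
have J_ltm : all (fun j => j < m) J by apply: sub_all J_lt => j /andP[].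
have m_notin_J : m \notin J by apply/negP => /(allP J_ltm); rewrite ltnn.
pose f1 (s : 'S_m) := append_min2 (perm_word s).
pose f2 (t : 'S_m.+1) := insert_min m (perm_word t).
rewrite !dcountE (cardE [pred s : 'S_m | _]) (cardE [pred t : 'S_m.+1 | _]).
rewrite -(size_map f1) -(size_map f2) -size_cat; apply: card_perm_words_ge.
  rewrite cat_uniq (map_inj_uniq (@append_min2_inj m)) (map_inj_uniq (@insert_min_inj m)).
  rewrite !enum_uniq /= andbT.
  apply/hasP => -[w /mapP[t]]; rewrite mem_enum => t_des -> /mapP[s _].
  by apply/eqP; apply: insert_min_neq_append_min2 t_des.
move=> w; rewrite mem_cat => /orP[] /mapP[x]; rewrite mem_enum inE => x_des ->.
  by rewrite perm_eq_append_min2 has_descents_append_min2.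
by rewrite perm_eq_insert_min has_descents_insert_min.
Qed.

Lemma dcount_add_cons_prefix J m n : m <= n -> all (fun j => 0 < j < m) J ->
  dcount J n + dcount (m :: J) n =
  #|[pred s : 'S_n | has_descents J (take m (perm_word s))
                     && has_descents [::] (drop m (perm_word s))]|.
Proof.
move=> le_mn J_lt; rewrite !dcountE -cardUI.
have le_m_size (s : 'S_n) : m <= size (perm_word s) by rewrite size_perm_word.
have desE (b : bool) (s : 'S_n) := has_descents_take_drop b (le_m_size s) J_lt.
rewrite (@eq_card0 _ [predI _ & _]) ?addn0 => [|s]; last first.
  by rewrite !inE /= (desE false) (desE true); case: descent; rewrite ?andbF.
apply: eq_card => s; rewrite !inE /= (desE false) (desE true).
by case: descent; rewrite ?andbT ?andbF ?orbF.
Qed.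

Definition ord_seq n (A : {set 'I_n}) : seq nat := [seq val i | i <- enum A].

Lemma ord_seq_sorted n (A : {set 'I_n}) : sorted ltn (ord_seq A).
Proof.
apply: (subseq_sorted ltn_trans (s2 := iota 0 n)); last exact: iota_ltn_sorted.
rewrite -val_enum_ord; apply: map_subseq.
rewrite -deprecated_filter_index_enum enumT.
by rewrite /index_enum; case: index_enum_key => /=; apply: filter_subseq.
Qed.

Lemma ord_seq_uniq n (A : {set 'I_n}) : uniq (ord_seq A).
Proof. exact: (sorted_uniq ltn_trans ltnn (ord_seq_sorted A)). Qed.

Lemma size_ord_seq n (A : {set 'I_n}) : size (ord_seq A) = #|A|.
Proof. by rewrite size_map -cardE. Qed.

Lemma mem_ord_seq n (A : {set 'I_n}) (i : 'I_n) : (val i \in ord_seq A) = (i \in A).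
Proof. by rewrite mem_map ?mem_enum //; apply: val_inj. Qed.

Lemma perm_ord_seq_setC n (A : {set 'I_n}) :
  perm_eq (ord_seq A ++ ord_seq (~: A)) (iota 0 n).
Proof.
apply: uniq_perm; rewrite ?iota_uniq //.
  rewrite -map_cat map_inj_uniq; last exact: val_inj.
  rewrite cat_uniq !enum_uniq /= andbT; apply/hasP => -[x].
  by rewrite !mem_enum inE => /negP.
move=> x; rewrite mem_iota add0n mem_cat; apply/idP/idP.
  by case/orP => /mapP[i _ ->]; apply: ltn_ord.
move=> lt_xn; rewrite (mem_ord_seq A (Ordinal lt_xn)) (mem_ord_seq _ (Ordinal lt_xn)) inE.
exact: orbN.
Qed.

Lemma nth_sorted_ltn s i j : sorted ltn s -> i < size s -> j < size s ->
  (nth 0 s i < nth 0 s j) = (i < j).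
Proof.
move=> s_sorted lt_is lt_js.
have nth_lt := sorted_ltn_nth ltn_trans 0 s_sorted.
case: (ltngtP i j) => [lt_ij | lt_ji | ->]; first exact: nth_lt.
  by apply/negbTE; rewrite -leqNgt ltnW // nth_lt.
by rewrite ltnn.
Qed.

Lemma has_descents_map_nth J s w : sorted ltn s -> all (fun i => i < size s) w ->
  has_descents J (map (nth 0 s) w) = has_descents J w.
Proof.
by move=> s_sorted /allP w_lt; apply: has_descents_map => i j /w_lt ? /w_lt ?; apply: nth_sorted_ltn.
Qed.

Lemma perm_map_nth (s w : seq nat) : perm_eq w (iota 0 (size s)) -> perm_eq (map (nth 0 s) w) s.
Proof.
by move/(perm_map (nth 0 s)); rewrite map_nth_iota0 // take_size.
Qed.

Lemma map_nth_inj (s w w' : seq nat) :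
  uniq s -> all (fun i => i < size s) w -> all (fun i => i < size s) w' ->
  map (nth 0 s) w = map (nth 0 s) w' -> w = w'.
Proof.
move=> s_uniq w_lt w'_lt; apply: (inj_in_map (A := [pred i | i < size s])) => //.
by move=> i j lt_is lt_js /eqP; rewrite nth_uniq // => /eqP.
Qed.

Lemma perm_word_lt n (s : 'S_n) k : n <= k -> all (fun i => i < k) (perm_word s).
Proof. by move=> le_nk; apply/allP => i; rewrite mem_perm_word => /leq_trans; apply. Qed.

Definition shuffle_word n m (A : {set 'I_n}) (s : 'S_m) (t : 'S_(n - m)) : seq nat :=
  map (nth 0 (ord_seq A)) (perm_word s) ++ map (nth 0 (ord_seq (~: A))) (perm_word t).

Section Shuffle.

Variables n m : nat.
Implicit Types (A : {set 'I_n}) (s : 'S_m) (t : 'S_(n - m)).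

Lemma size_ord_seq_setC A : #|A| = m -> size (ord_seq (~: A)) = n - m.
Proof. by move=> card_A; rewrite size_ord_seq cardsCs setCK card_ord card_A. Qed.

Lemma perm_shuffle_word A s t : #|A| = m -> perm_eq (shuffle_word A s t) (iota 0 n).
Proof.
move=> card_A; apply: perm_trans (perm_ord_seq_setC A).
apply: perm_cat; apply: perm_map_nth.
  by rewrite size_ord_seq card_A perm_word_iota.
by rewrite size_ord_seq_setC // perm_word_iota.
Qed.

Lemma take_shuffle_word A s t :
  take m (shuffle_word A s t) = map (nth 0 (ord_seq A)) (perm_word s).
Proof. by rewrite take_size_cat // size_map size_perm_word. Qed.

Lemma drop_shuffle_word A s t :
  drop m (shuffle_word A s t) = map (nth 0 (ord_seq (~: A))) (perm_word t).
Proof. by rewrite drop_size_cat // size_map size_perm_word. Qed.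

Lemma shuffle_word_inj A A' s s' t t' : #|A| = m -> #|A'| = m ->
  shuffle_word A s t = shuffle_word A' s' t' -> [/\ A = A', s = s' & t = t'].
Proof.
move=> card_A card_A' eq_w.
have eq_take := congr1 (take m) eq_w; rewrite !take_shuffle_word in eq_take.
have perm_take (B : {set 'I_n}) (u : 'S_m) : #|B| = m -> perm_eq (map (nth 0 (ord_seq B)) (perm_word u)) (ord_seq B).
  by move=> card_B; apply: perm_map_nth; rewrite size_ord_seq card_B perm_word_iota.
have eq_A : A = A'.
  apply/setP => i; rewrite -!mem_ord_seq -(perm_mem (perm_take A s card_A)).
  by rewrite eq_take (perm_mem (perm_take A' s' card_A')).
subst A'; have eq_drop := congr1 (drop m) eq_w; rewrite !drop_shuffle_word in eq_drop.
split=> //; apply: perm_word_inj.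
  by apply: (map_nth_inj (ord_seq_uniq A)) eq_take; rewrite size_ord_seq card_A perm_word_lt.
apply: (map_nth_inj (ord_seq_uniq (~: A))) eq_drop;
  by rewrite size_ord_seq_setC // perm_word_lt.
Qed.

End Shuffle.

Lemma card_shuffle_dom n m : m <= n ->
  #|[set x : 'S_m * {set 'I_n} * 'S_(n - m) | #|x.1.2| == m]| = n`!.
Proof.
move=> le_mn.
rewrite (_ : [set x | _] = setX (setX setT [set A : {set 'I_n} | #|A| == m]) setT).
  rewrite !cardsX !cardsT !card_Sn card_draws card_ord -(bin_fact le_mn).
  by rewrite mulnAC mulnC.
by apply/setP => -[[s A] t]; rewrite !inE andbT.
Qed.

Lemma card_perm_shuffle n m (C : pred (seq nat)) : m <= n ->
  #|[pred u : 'S_n | C (perm_word u)]| =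
  #|[set x : 'S_m * {set 'I_n} * 'S_(n - m) | (#|x.1.2| == m) && C (shuffle_word x.1.2 x.1.1 x.2)]|.
Proof.
move=> le_mn.
pose Phi (x : 'S_m * {set 'I_n} * 'S_(n - m)) := perm_of_word n (shuffle_word x.1.2 x.1.1 x.2).
have PhiE (x : 'S_m * {set 'I_n} * 'S_(n - m)) : #|x.1.2| = m -> perm_word (Phi x) = shuffle_word x.1.2 x.1.1 x.2.
  by move=> card_A; apply/perm_of_wordK/perm_shuffle_word.
have Phi_inj (x y : 'S_m * {set 'I_n} * 'S_(n - m)) : #|x.1.2| = m -> #|y.1.2| = m -> Phi x = Phi y -> x = y.
  move: x y => [[s A] t] [[s' A'] t'] /= card_A card_A' /(congr1 (@perm_word n)).
  by rewrite !PhiE //= => /shuffle_word_inj[] // -> -> ->.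
have Phi_onto u : exists2 x : 'S_m * {set 'I_n} * 'S_(n - m), #|x.1.2| = m & u = Phi x.
  have : u \in Phi @: [set x : 'S_m * {set 'I_n} * 'S_(n - m) | #|x.1.2| == m].
    have /eqP -> : Phi @: [set x : 'S_m * {set 'I_n} * 'S_(n - m) | #|x.1.2| == m] == setT.
      rewrite eqEcard subsetT cardsT card_Sn card_in_imset ?card_shuffle_dom ?leqnn //.
      by move=> x y; rewrite !inE => /eqP card_x /eqP card_y; apply: Phi_inj.
    by rewrite inE.
  by case/imsetP => x; rewrite inE => /eqP card_x eq_u; exists x.
rewrite -(card_in_imset (f := Phi)) => [|x y]; last first.
  by rewrite !inE => /andP[/eqP card_x _] /andP[/eqP card_y _]; apply: Phi_inj.
apply: eq_card => u; rewrite inE /=; apply/idP/imsetP => [C_u | [x] ].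
  have [x card_x eq_u] := Phi_onto u.
  by exists x; rewrite // inE card_x eqxx -PhiE // -eq_u.
by rewrite inE => /andP[/eqP card_x C_x] ->; rewrite PhiE.
Qed.

(* A shuffle has the descents of [s] in its first [m] positions and those of [t] after them. *)
Lemma card_descents_prefix J m n : m <= n ->
  #|[pred u : 'S_n | has_descents J (take m (perm_word u))
                     && has_descents [::] (drop m (perm_word u))]| = 'C(n, m) * dcount J m.
Proof.
move=> le_mn.
rewrite (card_perm_shuffle (fun w => has_descents J (take m w) && has_descents [::] (drop m w))
                            le_mn).
rewrite (_ : [set x | _] =
   setX (setX [set s : 'S_m | has_descents J (perm_word s)] [set A : {set 'I_n} | #|A| == m])
        [set t : 'S_(n - m) | has_descents [::] (perm_word t)]); last first.
  apply/setP => -[[s A] t]; rewrite !inE /=.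
  case: (boolP (#|A| == m)) => /= [/eqP card_A | _]; last by rewrite andbF.
  rewrite andbT take_shuffle_word drop_shuffle_word.
  by rewrite !has_descents_map_nth ?ord_seq_sorted ?(size_ord_seq_setC card_A) ?size_ord_seq
    ?card_A ?perm_word_lt.
rewrite !cardsX card_draws card_ord mulnC.
have -> : #|[set t : 'S_(n - m) | has_descents [::] (perm_word t)]| = 1.
  by rewrite -(dcount_nil (n - m)) dcountE; apply: eq_card => t; rewrite inE.
by rewrite mul1n mulnC dcountE; congr (_ * _); apply: eq_card => s; rewrite inE.
Qed.

Lemma dcount_add_cons J m n : m <= n -> all (fun j => 0 < j < m) J ->
  dcount J n + dcount (m :: J) n = 'C(n, m) * dcount J m.
Proof. by move=> le_mn J_lt; rewrite dcount_add_cons_prefix // card_descents_prefix. Qed.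

Lemma leq_maxI I i : i \in I -> i <= maxI I.
Proof. by move=> i_in; rewrite /maxI (leq_bigmax_seq (F := id)). Qed.

Lemma maxI_leq I k : {in I, forall i, i <= k} -> maxI I <= k.
Proof. by move=> le_Ik; apply/bigmax_leqP_seq => i i_in _; apply: le_Ik. Qed.

Lemma maxI_lt m J : 0 < m -> {in J, forall j, j < m} -> maxI J < m.
Proof.
move=> m_gt0 J_lt; rewrite -(prednK m_gt0) ltnS; apply: maxI_leq => j /J_lt lt_jm.
by rewrite -ltnS prednK.
Qed.

Lemma maxI_eq_mem I I' : I =i I' -> maxI I = maxI I'.
Proof.
move=> eq_I; apply/eqP; rewrite eqn_leq !maxI_leq // => i i_in; apply: leq_maxI;
  by move: i_in; rewrite eq_I.
Qed.

Lemma maxI_mem I : I != [::] -> maxI I \in I.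
Proof.
elim: I => [// | a I IH] _; rewrite /maxI big_cons -/(maxI I) inE.
case: (eqVneq I [::]) => [-> | I_nil]; first by rewrite /maxI big_nil maxn0 eqxx.
by case: (leqP (maxI I) a) => _; rewrite ?eqxx ?IH ?orbT.
Qed.

Lemma maxI_cons m J : all (fun j => j < m) J -> maxI (m :: J) = m.
Proof.
by move=> /allP J_lt; rewrite /maxI big_cons; apply/maxn_idPl/maxI_leq => j /J_lt/ltnW.
Qed.

Local Open Scope ring_scope.

Definition binom_poly (R : numFieldType) (m : nat) : {poly R} :=
  (m`!%:R)^-1 *: \prod_(i < m) ('X - i%:R%:P).

Lemma horner_binom_poly_nat (R : numFieldType) m n :
  (m <= n)%N -> (binom_poly R m).[n%:R] = 'C(n, m)%:R.
Proof.
move=> le_mn; rewrite hornerZ horner_prod; under eq_bigr do rewrite hornerXsubC.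
have prodE k : (k <= n)%N -> \prod_(i < k) (n%:R - i%:R) = (n ^_ k)%:R :> R.
  elim: k => [|k IH] lt_kn; first by rewrite big_ord0 ffactn0.
  by rewrite big_ord_recr /= IH ?ffactnSr ?natrM ?natrB ?(ltnW lt_kn).
by rewrite prodE // -bin_ffact natrM mulrC mulfK // pnatr_eq0 -lt0n fact_gt0.
Qed.

Lemma horner_binom_poly_Nm1 (R : numFieldType) m : (binom_poly R m).[-1] = (-1) ^+ m.
Proof.
rewrite hornerZ horner_prod; under eq_bigr do rewrite hornerXsubC.
have -> : \prod_(i < m) (-1 - i%:R) = (-1) ^+ m * m`!%:R :> R.
  elim: m => [|m IH]; first by rewrite big_ord0 expr0 mul1r.
  by rewrite big_ord_recr /= IH factS natrM exprS -[m.+1]addn1 natrD; ring.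
by rewrite mulrC mulfK // pnatr_eq0 -lt0n fact_gt0.
Qed.

Lemma poly_eq_nat (R : numDomainType) (p q : {poly R}) k :
  (forall n, (k < n)%N -> p.[n%:R] = q.[n%:R]) -> p = q.
Proof.
move=> eq_pq; apply/eqP; rewrite -subr_eq0; apply/negPn/negP => pq_neq0.
pose rs := [seq (k.+1 + i)%N%:R : R | i <- iota 0 (size (p - q))].
have rs_roots : all (root (p - q)) rs.
  apply/allP => _ /mapP[i _ ->].
  by rewrite /root hornerD hornerN eq_pq ?subrr // ltnS leq_addr.
have rs_uniq : uniq rs.
  by rewrite map_inj_uniq ?iota_uniq // => i j /eqP; rewrite eqr_nat => /eqP/addnI.
by have := max_poly_roots pq_neq0 rs_roots rs_uniq; rewrite size_map size_iota ltnn.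
Qed.

Lemma sign_sub_bounds (R : realFieldType) k (d c : R) :
  0 <= d -> 0 <= c -> (~~ odd k -> c <= d) -> 0 <= d - (-1) ^+ k * c <= d + c.
Proof.
move=> d_ge0 c_ge0 c_le_d; rewrite -signr_odd.
by case: (odd k) c_le_d => [_ | /(_ isT) c_le_d]; rewrite ?expr1 ?expr0 /=; apply/andP; split; lra.
Qed.

Definition descent_poly_bounds (I : seq nat) : Prop :=
  exists2 p : {poly rat}, forall n, (maxI I < n)%N -> p.[n%:R] = (dcount I n)%:R &
    0 <= (-1) ^+ maxI I * p.[-1] /\
    forall n, ((maxI I).+2 <= n)%N -> (-1) ^+ maxI I * p.[-1] <= (dcount I n)%:R.

Lemma descent_poly_bounds_nil : descent_poly_bounds [::].
Proof.
rewrite /descent_poly_bounds (_ : maxI [::] = 0%N) ?expr0 ?mul1r; last by rewrite /maxI big_nil.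
by exists 1 => [n _ | ]; rewrite hornerC ?dcount_nil //; split=> // n _; rewrite dcount_nil.
Qed.

Lemma descent_poly_bounds_eq_mem I I' : I =i I' -> descent_poly_bounds I -> descent_poly_bounds I'.
Proof.
move=> eq_I [p p_nat [c_ge0 c_le]]; rewrite /descent_poly_bounds -(maxI_eq_mem eq_I).
exists p => [n lt_n | ]; first by rewrite -(dcount_eq_mem _ eq_I) p_nat.
by split=> // n le_n; rewrite -(dcount_eq_mem _ eq_I) c_le.
Qed.

Lemma descent_poly_bounds_cons m J : (0 < m)%N -> all (fun j => 0 < j < m)%N J ->
  descent_poly_bounds J -> descent_poly_bounds (m :: J).
Proof.
move=> m_gt0 J_lt [q q_nat [c_ge0 c_le]].
have J_ltm : all (fun j => j < m)%N J by apply: sub_all J_lt => j /andP[].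
have lt_Jm : (maxI J < m)%N by apply: maxI_lt => // j /(allP J_ltm).
rewrite /descent_poly_bounds maxI_cons //.
set k := maxI J in q_nat c_ge0 c_le lt_Jm *; set d := dcount J m.
have c_eq : (-1) ^+ m * (d%:R *: binom_poly rat m - q).[-1] =
            d%:R - (-1) ^+ (m - k) * ((-1) ^+ k * q.[-1]).
  rewrite hornerD hornerN hornerZ horner_binom_poly_Nm1 mulrBr [d%:R * _]mulrC signrMK.
  by rewrite mulrA -exprD subnK // ltnW.
have /andP[c_eq_ge0 c_eq_le] : 0 <= (-1) ^+ m * (d%:R *: binom_poly rat m - q).[-1] <=
                          d%:R + (-1) ^+ k * q.[-1].
  rewrite c_eq; apply: sign_sub_bounds; rewrite ?ler0n // => even_mk.
  apply: c_le; rewrite ltn_neqAle lt_Jm andbT.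
  by apply: contraNneq even_mk => <-; rewrite subSnn.
exists (d%:R *: binom_poly rat m - q) => [n lt_mn | ].
  rewrite hornerD hornerN hornerZ horner_binom_poly_nat ?(ltnW lt_mn) // q_nat; last first.
    exact: ltn_trans lt_Jm lt_mn.
  apply: (addrI (dcount J n)%:R); rewrite -natrD dcount_add_cons ?(ltnW lt_mn) // natrM /d.
  by rewrite addrC subrK mulrC.
split=> [|n le_n]; first exact: c_eq_ge0.
apply: le_trans c_eq_le _.
have le_c_dS : (-1) ^+ k * q.[-1] <= (dcount J m.+1)%:R by apply: c_le; lia.
apply: (@le_trans _ _ (d + dcount J m.+1)%:R); first by rewrite natrD lerD2l.
by rewrite ler_nat (leq_trans (dcount_add_le_cons m_gt0 J_lt)) ?dcount_le.
Qed.

Lemma descent_poly_boundsP I : all (fun i => 0 < i)%N I -> descent_poly_bounds I.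
Proof.
have [k] := ubnP (maxI I); elim: k I => // k IH I /ltnSE le_Ik I_pos.
case: (eqVneq I [::]) => [-> | I_nil]; first exact: descent_poly_bounds_nil.
set M := maxI I; have M_in : M \in I by apply: maxI_mem.
have M_gt0 : (0 < M)%N by apply: (allP I_pos).
pose J := [seq i <- I | (i < M)%N].
have J_lt : all (fun j => 0 < j < M)%N J.
  by apply/allP => j; rewrite mem_filter => /andP[-> /(allP I_pos) ->].
apply: (@descent_poly_bounds_eq_mem (M :: J)).
  move=> i; rewrite inE mem_filter; case: (eqVneq i M) => [-> // | ne_iM] /=.
  case i_in: (i \in I); rewrite ?andbF ?andbT // ltn_neqAle ne_iM.
  exact: leq_maxI.
apply: descent_poly_bounds_cons => //; apply: IH; last by apply: sub_all J_lt => j /andP[].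
by apply: leq_trans le_Ik; apply: maxI_lt => // j; rewrite mem_filter => /andP[].
Qed.

Unset Implicit Arguments.

Theorem proposition3p10 (I : seq nat) (hI : all (fun i => (0 < i)%N) I) :
  (exists p : {poly rat},
      forall n : nat, (maxI I < n)%N -> p.[n%:R] = (dcount I n)%:R) /\
  (forall p : {poly rat},
      (forall n : nat, (maxI I < n)%N -> p.[n%:R] = (dcount I n)%:R) ->
      0 <= (-1) ^+ maxI I * p.[-1]).
Proof.
have [p p_nat [c_ge0 _]] := descent_poly_boundsP hI.
split=> [|q q_nat]; first by exists p.
by rewrite (@poly_eq_nat _ q p (maxI I)) // => n lt_n; rewrite p_nat ?q_nat.
Qed.
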